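(* Let $u_1,u_2,u_3,u_4,u_5\in\Sigma^*$ and letters $a_i,a_j,a_k\in\Sigma$ with $a_j\neq a_k$, $a_j\neq a_i$ and $a_i\neq a_k$, such that $a_k$ is not a suffix of $u_3$. Let $w=u_1a_iu_2a_ju_3a_ku_4a_iu_5$. Then there exists an element of $\mathtt{BR}(w)$ which is not rich.
   Context: $\Sigma$ is an alphabet and $\Sigma^*$ the set of finite words over it (including the empty word). For a word $w=w_1\cdots w_n$, $w^R=w_n\cdots w_1$; $w$ is a palindrome if $w=w^R$; a factor of $w$ is a word $u$ with $w=puq$. A word $w$ is rich if the number of distinct nonempty palindromic factors of $w$ equals $|w|$. The block reversal of a nonempty word $w$ is $\mathtt{BR}(w)=\{B_t\cdots B_1 : w=B_1\cdots B_t,\ t\ge1,\ \text{each } B_i \text{ nonempty}\}$. *)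

From mathcomp Require Import all_boot.
Set Implicit Arguments. Unset Strict Implicit. Unset Printing Implicit Defensive.

Definition palindrome (T : eqType) (w : seq T) : bool := rev w == w.

Definition factors (T : eqType) (w : seq T) : seq (seq T) :=
  [seq take j (drop i w) | i <- iota 0 (size w).+1, j <- iota 0 (size w).+1].

Definition pal_factors (T : eqType) (w : seq T) : seq (seq T) :=
  undup [seq u <- factors w | (u != [::]) && palindrome u].

Definition rich (T : eqType) (w : seq T) : Prop := size (pal_factors w) = size w.

Definition in_BR (T : eqType) (w v : seq T) : Prop :=
  exists bs : seq (seq T),
    [/\ 1 <= size bs, all (fun b => b != [::]) bs,
        flatten bs = w & v = flatten (rev bs)].

(* Appending a letter to a word creates at most one new palindromic factor,
   its longest palindromic suffix; hence a word has at most as many nonempty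
   palindromic factors as letters, and every factor of a rich word is rich.
   If a, b, c are distinct, [a b c a] has only three palindromic factors, so
   no word containing it is rich.
   Write a_j u_3 = y x with x a letter; then x <> a_k.  If x <> a_i, reversing
   the blocks u_1 | a_i u_2 y | x | a_k | u_4 a_i | u_5 creates the factor
   a_i a_k x a_i.  If x = a_i, reversing u_1 | a_i u_2 | a_j | u_3 a_k | u_4 a_i | u_5
   creates a_i u_3 a_k a_j a_i, which ends with a_i a_k a_j a_i. *)

From mathcomp Require Import all_boot zify.
Set Implicit Arguments. Unset Strict Implicit. Unset Printing Implicit Defensive.

Section PalindromicFactors.
Variable T : eqType.
Implicit Types (u v w p f s : seq T) (x : T).

Lemma mem_factors w u : (u \in factors w) = infix u w.
Proof.
apply/allpairsP/idP => [[[i j] [_ _ ->]]|u_w].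
  exact: infix_trans (infix_take _ _) (infix_drop _ _).
exists (infix_index u w, size u); split.
- by rewrite mem_iota add0n ltnS infixTindex.
- by rewrite mem_iota add0n ltnS size_infix.
- by move: u_w; rewrite infixE => /eqP.
Qed.

Lemma mem_pal_factors w u :
  (u \in pal_factors w) = [&& u != [::], palindrome u & infix u w].
Proof. by rewrite mem_undup mem_filter mem_factors andbA. Qed.

Lemma size_pal_factors_rev w : size (pal_factors (rev w)) = size (pal_factors w).
Proof.
apply/perm_size/uniq_perm; try exact: undup_uniq.
move=> u; rewrite !mem_pal_factors -infix_revLR.
by case: (boolP (palindrome u)) => [/eqP->|]; rewrite ?andbF.
Qed.

Lemma suffix_size_le u v s :
  suffix u s -> suffix v s -> size u <= size v -> suffix u v.
Proof.
rewrite !suffixE => /eqP def_u /eqP def_v le_uv.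
have le_vs : size v <= size s by rewrite -def_v size_drop leq_subr.
rewrite -def_v size_drop drop_drop -def_u; apply/eqP; congr drop.
move: le_uv; rewrite -def_u -def_v !size_drop; lia.
Qed.

Lemma palindrome_suffix_prefix u v :
  palindrome u -> palindrome v -> suffix u v -> prefix u v.
Proof. by move=> /eqP pal_u /eqP pal_v; rewrite -suffix_rev pal_u pal_v. Qed.

(* As a palindromic suffix of the palindrome [v], [u] is also a prefix of [v],
   so it occurs in [rcons w x] ending before the last letter. *)
Lemma palindrome_suffix_infix_belast w x u v :
  palindrome u -> palindrome v -> suffix u (rcons w x) -> suffix v (rcons w x) ->
  size u < size v -> infix u w.
Proof.
move=> pal_u pal_v u_wx v_wx lt_uv.
have /prefixP[t def_v] : prefix u v.
  by apply: palindrome_suffix_prefix => //; exact: suffix_size_le u_wx v_wx (ltnW lt_uv).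
case/lastP: t def_v => [|t y] def_v; first by rewrite def_v cats0 ltnn in lt_uv.
case/suffixP: v_wx => q; rewrite def_v -!rcons_cat => /rcons_inj[-> _].
by apply/infixP; exists q, t; rewrite catA.
Qed.

Lemma pal_factors_rcons_new w x u :
  u \in pal_factors (rcons w x) -> u \notin pal_factors w -> suffix u (rcons w x).
Proof.
by rewrite !mem_pal_factors infix_rconsl => /and3P[-> -> /orP[// | ->]].
Qed.

Lemma pal_factors_rcons_new_unique w x u v :
  u \in pal_factors (rcons w x) -> u \notin pal_factors w ->
  v \in pal_factors (rcons w x) -> v \notin pal_factors w -> u = v.
Proof.
wlog le_uv : u v / size u <= size v.
  by move=> IH u_wx u_w v_wx v_w; case: (leqP (size u) (size v)) => [|/ltnW] le;
    [exact: IH | symmetry; exact: IH].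
move=> u_wx u_w v_wx v_w.
have u_suf := pal_factors_rcons_new u_wx u_w.
have v_suf := pal_factors_rcons_new v_wx v_w.
move: le_uv; rewrite leq_eqVlt => /orP[/eqP eq_uv | lt_uv].
  move: u_suf v_suf; rewrite !suffixE eq_uv => /eqP def_u /eqP def_v.
  exact: etrans (esym def_u) def_v.
move: u_wx u_w; rewrite !mem_pal_factors => /and3P[-> pal_u _] /=.
move: v_wx; rewrite mem_pal_factors => /and3P[_ pal_v _].
by rewrite pal_u (palindrome_suffix_infix_belast pal_u pal_v u_suf v_suf lt_uv).
Qed.

Lemma size_pal_factors_rcons w x :
  size (pal_factors (rcons w x)) <= (size (pal_factors w)).+1.
Proof.
set P := pal_factors (rcons w x).
rewrite -(count_predC (mem (pal_factors w)) P) -addn1 !leq_add -?size_filter //.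
  apply: uniq_leq_size; first exact/filter_uniq/undup_uniq.
  by move=> u; rewrite mem_filter => /andP[].
case def_N : (filter _ P) => [//|u N].
apply: (@uniq_leq_size _ _ [:: u]); first by rewrite -def_N filter_uniq ?undup_uniq.
have : u \in filter (predC (mem (pal_factors w))) P by rewrite def_N mem_head.
rewrite mem_filter => /andP[u_w u_P].
move=> v; rewrite -def_N mem_filter => /andP[v_w v_P].
by rewrite inE (pal_factors_rcons_new_unique v_P v_w u_P u_w).
Qed.

Lemma size_pal_factors_cons w x :
  size (pal_factors (x :: w)) <= (size (pal_factors w)).+1.
Proof.
rewrite -size_pal_factors_rev rev_cons -(size_pal_factors_rev w).
exact: size_pal_factors_rcons.
Qed.

Lemma size_pal_factors_cat p f s :
  size (pal_factors (p ++ f ++ s)) <= size (pal_factors f) + size p + size s.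
Proof.
elim: p => [|x p IHp] /=; last by apply: leq_trans (size_pal_factors_cons _ _) _; lia.
elim/last_ind: s => [|s x IHs]; first by rewrite cats0 !addn0.
rewrite -rcons_cat size_rcons; apply: leq_trans (size_pal_factors_rcons _ _) _; lia.
Qed.

Lemma size_pal_factors_le w : size (pal_factors w) <= size w.
Proof. by have := size_pal_factors_cat w [::] [::]; rewrite /= !cats0 addn0. Qed.

Lemma rich_infix f v : infix f v -> rich v -> rich f.
Proof.
case/infixP=> p [s ->]; rewrite /rich => rich_v.
have := size_pal_factors_cat p f s; have := size_pal_factors_le f.
rewrite rich_v !size_cat; lia.
Qed.

End PalindromicFactors.

Lemma not_rich_abca (T : eqType) (a b c : T) :
  a != b -> c != a -> c != b -> ~ rich [:: a; b; c; a].
Proof.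
move=> /negbTE ab /negbTE ca /negbTE cb; rewrite /rich => rich_abca.
have ba : (b == a) = false by rewrite eq_sym.
have ac : (a == c) = false by rewrite eq_sym.
have bc : (b == c) = false by rewrite eq_sym.
have sub_abc : {subset pal_factors [:: a; b; c; a] <= pal_factors [:: a; b; c]}.
  move=> u u_abca; apply: contraT => u_abc.
  have := @pal_factors_rcons_new _ [:: a; b; c] a u u_abca u_abc.
  rewrite suffixE => /eqP def_u; move: def_u u_abca u_abc => <-.
  move: (_ - _) => k abca_k abc_k.
  move: abca_k; rewrite mem_pal_factors => /and3P[nil_u pal_u _].
  move: abc_k nil_u pal_u; rewrite mem_pal_factors /palindrome.
  by case: k => [|[|[|[|k]]]]; rewrite /= ?eqseq_cons ?eqxx ?ab ?ac ?bc ?ba ?ca ?cb.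
have := leq_trans (uniq_leq_size (undup_uniq _) sub_abc) (size_pal_factors_le _).
by rewrite rich_abca.
Qed.

Lemma not_rich_of_infix (T : eqType) (a b c : T) v :
  a != b -> c != a -> c != b -> infix [:: a; b; c; a] v -> ~ rich v.
Proof. by move=> ab ca cb abca_v /(rich_infix abca_v); exact: not_rich_abca. Qed.

Lemma in_BR_flatten_rev (T : eqType) (bs : seq (seq T)) :
  has (fun b => b != [::]) bs -> in_BR (flatten bs) (flatten (rev bs)).
Proof.
have flatten_nonnil cs : flatten [seq c <- cs | c != [::]] = flatten cs.
  by elim: cs => //= -[|x c] cs /= ->.
move=> has_bs; exists [seq b <- bs | b != [::]]; split.
- by rewrite size_filter -has_count.
- exact: filter_all.
- exact: flatten_nonnil.
- by rewrite -filter_rev flatten_nonnil.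
Qed.

Lemma last_neq_of_not_suffix (T : eqType) (x y : T) s :
  x != y -> ~~ suffix [:: y] s -> last x s != y.
Proof.
case/lastP: s => [//|s z] _; rewrite last_rcons.
by rewrite -[[:: y]]/(rcons [::] y) suffix_rcons suffix0s andbT eq_sym.
Qed.

Theorem mainTheorem5 (T : eqType) (u1 u2 u3 u4 u5 : seq T) (ai aj ak : T) :
  aj != ak -> aj != ai -> ai != ak ->
  ~~ suffix [:: ak] u3 ->
  exists v : seq T,
    in_BR (u1 ++ ai :: u2 ++ aj :: u3 ++ ak :: u4 ++ ai :: u5) v /\ ~ rich v.
Proof.
move=> jk ji ik not_suf; have xk := last_neq_of_not_suffix jk not_suf.
have [xi | xi] := eqVneq (last aj u3) ai.
- have last_u3 : last ai u3 = ai by case: u3 {not_suf xk} xi.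
  have def_u3 := lastI ai u3; rewrite last_u3 in def_u3.
  set bs := [:: u1; ai :: u2; [:: aj]; rcons u3 ak; rcons u4 ai; u5].
  exists (flatten (rev bs)); split.
    have -> : u1 ++ ai :: u2 ++ aj :: u3 ++ ak :: u4 ++ ai :: u5 = flatten bs.
      by rewrite /= !cat_rcons cats0.
    by apply: in_BR_flatten_rev; rewrite /= orbT.
  apply: (not_rich_of_infix ik ji jk); apply/infixP.
  exists (u5 ++ u4 ++ belast ai u3), (u2 ++ u1).
  by rewrite /bs /rev /= cats0 !cat_rcons -cat_cons def_u3 cat_rcons -!catA.
set bs := [:: u1; ai :: u2 ++ belast aj u3; [:: last aj u3]; [:: ak]; rcons u4 ai; u5].
exists (flatten (rev bs)); split.
  have -> : u1 ++ ai :: u2 ++ aj :: u3 ++ ak :: u4 ++ ai :: u5 = flatten bs.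
    by rewrite /= cats0 cat_rcons -(cat_rcons (last aj u3)) rcons_cat -lastI -catA.
  by apply: in_BR_flatten_rev; rewrite /= orbT.
apply: (not_rich_of_infix ik xi xk); apply/infixP.
exists (u5 ++ u4), (u2 ++ belast aj u3 ++ u1).
by rewrite /bs /rev /= cats0 cat_rcons -!catA.
Qed.
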